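(* Let $n\geq 1$ be an integer. The set of real neighbours of $\mathcal{E}_n$ is $\{0,\pm1,\pm2\}$ when $n=1$ or $n\geq 5$, and is $\{0,\pm1,\pm2,\pm3\}$ when $n\in\{2,3,4\}$. The set of real neighbours of $T_n$ is $\{0,\pm1\}$.
   Context: Let $b:=-n+i$. $T_n$ is the attractor of the iterated function system $\{z\mapsto b^{-1}(z+d): d\in\{0,1,\ldots,n^2\}\}$, i.e. $T_n=\{\sum_{j\ge1}d_jb^{-j}: d_j\in\{0,\ldots,n^2\}\}$. $\mathcal{E}_n$ is the attractor of $\{z\mapsto b^{-1}(z+\delta): \delta\in\{0,\pm1,\ldots,\pm n^2\}\}$, i.e. $\mathcal{E}_n=\{\sum_{j\ge1}\delta_jb^{-j}: \delta_j\in\{-n^2,\ldots,n^2\}\}$. For $Y\subset\mathbb{C}$, a neighbour of $Y$ is a Gaussian integer $s$ with $Y\cap(Y+s)\neq\emptyset$; a real neighbour is a neighbour that is a real number (an integer). *)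

From Stdlib Require Import Reals ZArith.
From Coquelicot Require Import Coquelicot.
Open Scope R_scope.

Definition base (n : nat) : C := (- INR n, 1).

Definition binvpow (n : nat) (j : nat) : C := Cinv (Cpow (base n) j).

Definition digitT (n : nat) (d : Z) : Prop := (0 <= d <= Z.of_nat (n * n))%Z.
Definition digitE (n : nat) (d : Z) : Prop :=
  (- Z.of_nat (n * n) <= d <= Z.of_nat (n * n))%Z.

Definition digit_attractor (n : nat) (D : Z -> Prop) (z : C) : Prop :=
  exists d : nat -> Z, (forall j, D (d j)) /\
    is_series (fun j : nat => Cmult (RtoC (IZR (d j))) (binvpow n (S j))) z.

Definition T_set (n : nat) : C -> Prop := digit_attractor n (digitT n).
Definition E_set (n : nat) : C -> Prop := digit_attractor n (digitE n).

Definition neighbour (Y : C -> Prop) (s : C) : Prop :=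
  exists z, Y z /\ exists y, Y y /\ z = Cplus y s.

Definition real_neighbour (Y : C -> Prop) (k : Z) : Prop :=
  neighbour Y (RtoC (IZR k)).

(* Two points of the attractor differ by [k] iff [k = sum_j delta_j b^-j] with digits
   [|delta_j| <= D], where [D = n^2] for [T_n] and [D = 2 n^2] for [E_n]. Running such an
   expansion backwards, [z_(m+1) = b z_m - delta_m] with [z_0 = k], the series converges
   exactly when the Gaussian integers [z_m] stay bounded, and then [|z_m| <= D / (|b| - 1)].
   Writing [z_m = p_m + q_m b], the digits become [-delta_m = q_(m+2) + 2n q_(m+1) + (n^2+1) q_m]
   with [q_0 = 0], [q_1 = k], so the real neighbours are the starting values of bounded integer
   sequences satisfying this recurrence inequality. Eventually periodic sequences realise
   [|k| <= 1] (resp. [2]) and, for [E_n] with [n = 2, 3, 4], also [|k| = 3]. Conversely, for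
   [n >= 3] the dominant coefficient [n^2 + 1] forces [(n^2 - 2n) |q_m| <= D], which settles
   large [n]; the remaining cases are finite: pruning the pairs [(q_m, q_(m+1))] in the box
   [|q| <= M] that admit no admissible successor leaves only pairs [(0, k)] with [|k|] small. *)

From Stdlib Require Import Reals ZArith Lia Lra List Bool.
From Coquelicot Require Import Coquelicot.
Import ListNotations.
Open Scope R_scope.

Lemma is_series_Cmod_iff (a : nat -> C) (l : C) :
  is_series a l <-> is_lim_seq (fun m => Cmod (sum_n a m - l)) 0.
Proof.
  unfold is_series.
  rewrite (filterlim_locally_ball_norm (K := C_AbsRing) (U := C_NormedModule)),
    <- is_lim_seq_spec.
  split; intros H eps; eapply filter_imp; try apply (H eps); intros m Hm;
    unfold ball_norm in *; simpl in *;
    rewrite Rminus_0_r, Rabs_pos_eq in * by apply Cmod_ge_0; exact Hm.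
Qed.

Lemma Rabs_inv_lt_1 (r : R) : 1 < r -> Rabs (/ r) < 1.
Proof.
  intro Hr. rewrite Rabs_pos_eq by (left; apply Rinv_0_lt_compat; lra).
  rewrite <- Rinv_1. apply Rinv_lt_contravar; lra.
Qed.

Lemma is_lim_seq_geom_scal (c r : R) : 1 < r -> is_lim_seq (fun m => c * (/ r) ^ m) 0.
Proof.
  intro Hr. replace (Finite 0) with (Rbar_mult c 0) by (simpl; f_equal; ring).
  apply is_lim_seq_scal_l, is_lim_seq_geom, Rabs_inv_lt_1, Hr.
Qed.

Lemma is_lim_seq_div_pow_bounded (x : nat -> R) (r B : R) :
  1 < r -> (forall m, 0 <= x m <= B) -> is_lim_seq (fun m => x m / r ^ m) 0.
Proof.
  intros Hr Hx.
  apply (is_lim_seq_le_le (fun _ => 0) _ (fun m => B * (/ r) ^ m));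
    [| apply is_lim_seq_const | apply is_lim_seq_geom_scal, Hr].
  intro m. specialize (Hx m). assert (0 < r ^ m) by (apply pow_lt; lra).
  rewrite pow_inv. split.
  - apply Rdiv_le_0_compat; lra.
  - unfold Rdiv. apply Rmult_le_compat_r; [left; apply Rinv_0_lt_compat|]; lra.
Qed.

(* The normalised excess [w m = (x m - D/(r-1)) / r^m] is nondecreasing and tends to 0. *)
Lemma le_of_expanding (x : nat -> R) (r D : R) :
  1 < r -> (forall m, r * x m - D <= x (S m)) ->
  is_lim_seq (fun m => x m / r ^ m) 0 -> forall m, x m <= D / (r - 1).
Proof.
  intros Hr Hstep Hlim.
  set (C := D / (r - 1)).
  set (w := fun m => (x m - C) / r ^ m).
  assert (Hmono : forall m, w m <= w (S m)).
  { intro m. assert (0 < r ^ m) by (apply pow_lt; lra).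
    assert (Hdiff : w (S m) - w m = (x (S m) - (r * x m - D)) / r ^ S m).
    { unfold w, C. simpl. field. split; lra. }
    assert (0 <= (x (S m) - (r * x m - D)) / r ^ S m).
    { apply Rdiv_le_0_compat; [specialize (Hstep m); lra | apply pow_lt; lra]. }
    lra. }
  assert (Hw : is_lim_seq w 0).
  { apply (is_lim_seq_ext (fun m => x m / r ^ m - C * (/ r) ^ m)).
    { intro m. unfold w. rewrite pow_inv. field. apply pow_nonzero. lra. }
    replace (Finite 0) with (Finite (0 - 0)) by (f_equal; ring).
    apply is_lim_seq_minus'; [exact Hlim | apply is_lim_seq_geom_scal, Hr]. }
  intro m. apply Rnot_lt_le. intro Hlt.
  assert (Hwm : 0 < w m) by (apply Rdiv_lt_0_compat; [lra | apply pow_lt; lra]).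
  assert (Hup : forall j, w m <= w (j + m)%nat).
  { induction j as [|j IH]; [apply Rle_refl | eapply Rle_trans; [exact IH | apply Hmono]]. }
  pose proof (is_lim_seq_le _ _ _ _ Hup (is_lim_seq_const (w m))
                (proj1 (is_lim_seq_incr_n w m 0) Hw)) as Hle.
  simpl in Hle. lra.
Qed.

Lemma abs_le_of_real_bound (z D M : Z) (c : R) :
  0 < c -> IZR (Z.abs z) * c <= IZR D -> IZR D < IZR (M + 1) * c -> (Z.abs z <= M)%Z.
Proof.
  intros Hc Hz HD. apply Z.lt_succ_r, lt_IZR. unfold Z.succ.
  apply (Rmult_lt_reg_r c); lra.
Qed.

(** * Expansions in base [b = -n + i] *)

Lemma base_neq0 (n : nat) : base n <> 0%C.
Proof. unfold base. intro H. injection H. lra. Qed.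

Lemma le_Cmod_base (n : nat) (a : R) : 0 <= a -> a * a <= INR n ^ 2 + 1 -> a <= Cmod (base n).
Proof.
  intros Ha Haa. unfold Cmod, base. simpl.
  rewrite <- (sqrt_square a) by exact Ha. apply sqrt_le_1_alt. nra.
Qed.

Lemma Cmod_base_gt1 (n : nat) : (1 <= n)%nat -> 1 < Cmod (base n).
Proof.
  intro Hn. apply le_INR in Hn. simpl in Hn.
  assert (1.4 <= Cmod (base n)) by (apply le_Cmod_base; simpl; nra). lra.
Qed.

Lemma Cmod_binvpow (n j : nat) : Cmod (binvpow n j) = / Cmod (base n) ^ j.
Proof.
  unfold binvpow. rewrite Cmod_inv by (apply Cpow_nz, base_neq0). now rewrite Cmod_pow.
Qed.

Definition digit_term (n : nat) (d : nat -> Z) (j : nat) : C :=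
  Cmult (RtoC (IZR (d j))) (binvpow n (S j)).

Definition expansion (n : nat) (D k : Z) : Prop :=
  exists delta : nat -> Z, (forall j, (Z.abs (delta j) <= D)%Z) /\
    is_series (digit_term n delta) (RtoC (IZR k)).

Lemma ex_series_digit_term (n : nat) (d : nat -> Z) (B : Z) :
  (1 <= n)%nat -> (forall j, (Z.abs (d j) <= B)%Z) -> ex_series (digit_term n d).
Proof.
  intros Hn HB. pose proof (Cmod_base_gt1 n Hn) as Hr.
  set (r := Cmod (base n)) in *.
  apply (@ex_series_le C_AbsRing C_CompleteNormedModule _ (fun j => IZR B * (/ r) ^ j)).
  - intro j. change (Cmod (digit_term n d j) <= IZR B * (/ r) ^ j).
    unfold digit_term. rewrite Cmod_mult, Cmod_R, Cmod_binvpow, <- abs_IZR, <- pow_inv.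
    fold r. assert (0 < / r < 1).
    { split; [apply Rinv_0_lt_compat; lra|]. rewrite <- Rinv_1. apply Rinv_lt_contravar; lra. }
    assert (0 < (/ r) ^ j) by (apply pow_lt; lra).
    assert (IZR (Z.abs (d j)) <= IZR B) by (apply IZR_le, HB).
    assert (0 <= IZR (Z.abs (d j))) by (apply IZR_le, Z.abs_nonneg).
    simpl. apply Rmult_le_compat; nra.
  - apply (@ex_series_scal_l R_AbsRing R_NormedModule (IZR B) (fun j => (/ r) ^ j)).
    eexists. apply is_series_geom, Rabs_inv_lt_1, Hr.
Qed.

(* A difference [delta] with [|delta| <= hi - lo] splits as
   [(lo + max delta 0) - (lo + max (-delta) 0)]. *)
Lemma real_neighbour_interval_iff (n : nat) (lo hi k : Z) :
  (1 <= n)%nat -> (lo <= hi)%Z ->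
  real_neighbour (digit_attractor n (fun d => lo <= d <= hi)%Z) k <-> expansion n (hi - lo) k.
Proof.
  intros Hn Hlh. split.
  - intros [z [[d1 [Hd1 Hz]] [y [[d2 [Hd2 Hy]] Hzy]]]].
    exists (fun j => d1 j - d2 j)%Z. split.
    { intro j. specialize (Hd1 j). specialize (Hd2 j). lia. }
    replace (RtoC (IZR k)) with (plus z (opp y))
      by (rewrite Hzy; unfold plus, opp; simpl; ring).
    eapply is_series_ext; [|exact (is_series_minus _ _ _ _ Hz Hy)].
    intro j. unfold digit_term, plus, opp. simpl. rewrite minus_IZR, RtoC_minus. ring.
  - intros [delta [Hdelta Hs]].
    set (d1 := fun j => (lo + Z.max (delta j) 0)%Z).
    set (d2 := fun j => (lo + Z.max (- delta j) 0)%Z).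
    assert (Hd2 : forall j, (lo <= d2 j <= hi)%Z)
      by (intro j; specialize (Hdelta j); unfold d2; lia).
    destruct (ex_series_digit_term n d2 (Z.abs lo + Z.abs hi) Hn) as [y Hy].
    { intro j. specialize (Hd2 j). lia. }
    exists (plus y (RtoC (IZR k))).
    split; [|exists y; split; [exists d2; split; auto | reflexivity]].
    exists d1. split; [intro j; specialize (Hdelta j); unfold d1; lia|].
    eapply is_series_ext; [|exact (is_series_plus _ _ _ _ Hy Hs)].
    intro j. unfold digit_term, plus, d1, d2. simpl.
    replace (lo + Z.max (delta j) 0)%Z with (lo + Z.max (- delta j) 0 + delta j)%Z by lia.
    rewrite !plus_IZR, !RtoC_plus. ring.
Qed.

Lemma real_neighbour_T_iff (n : nat) (k : Z) : (1 <= n)%nat ->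
  real_neighbour (T_set n) k <-> expansion n (Z.of_nat n * Z.of_nat n) k.
Proof.
  intro Hn. change (T_set n) with (digit_attractor n (fun d => 0 <= d <= Z.of_nat (n * n))%Z).
  rewrite real_neighbour_interval_iff by lia.
  now rewrite Z.sub_0_r, Nat2Z.inj_mul.
Qed.

Lemma real_neighbour_E_iff (n : nat) (k : Z) : (1 <= n)%nat ->
  real_neighbour (E_set n) k <-> expansion n (2 * (Z.of_nat n * Z.of_nat n)) k.
Proof.
  intro Hn.
  change (E_set n) with
    (digit_attractor n (fun d => - Z.of_nat (n * n) <= d <= Z.of_nat (n * n))%Z).
  rewrite real_neighbour_interval_iff by lia.
  now replace (Z.of_nat (n * n) - - Z.of_nat (n * n))%Z
    with (2 * (Z.of_nat n * Z.of_nat n))%Z by lia.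
Qed.

Lemma expansion_scale (n : nat) (D D' k c : Z) :
  (Z.abs c * D <= D')%Z -> expansion n D k -> expansion n D' (c * k).
Proof.
  intros HcD [delta [Hdelta Hs]]. exists (fun j => c * delta j)%Z. split.
  { intro j. rewrite Z.abs_mul. specialize (Hdelta j). pose proof (Z.abs_nonneg c). nia. }
  replace (RtoC (IZR (c * k))) with (scal (RtoC (IZR c)) (RtoC (IZR k)))
    by (rewrite mult_IZR, RtoC_mult; reflexivity).
  eapply is_series_ext; [|exact (is_series_scal_l _ _ _ Hs)].
  intro j. unfold digit_term, scal. simpl. unfold mult. simpl.
  rewrite mult_IZR, RtoC_mult. ring.
Qed.

(** * The integer recurrence *)

(* [x^2 + 2 n x + n^2 + 1] is the minimal polynomial of [b = -n + i]. *)
Definition minpoly_at (n : nat) (a c e : Z) : Z :=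
  (e + 2 * Z.of_nat n * c + (Z.of_nat n * Z.of_nat n + 1) * a)%Z.

Definition minpoly_seq (n : nat) (q : nat -> Z) (m : nat) : Z :=
  minpoly_at n (q m) (q (S m)) (q (S (S m))).

Definition admissible (n : nat) (D k : Z) (q : nat -> Z) : Prop :=
  q O = 0%Z /\ q 1%nat = k /\ forall m, (Z.abs (minpoly_seq n q m) <= D)%Z.

Definition gauss (n : nat) (p q : Z) : C := (RtoC (IZR p) + RtoC (IZR q) * base n)%C.

(* The remainders [z_m = b^m (k - sum_{j<m} delta_j b^-(j+1))] of an expansion, written
   as [p_m + q_m b]; then [p_m = q_(m+1) + 2 n q_m] and [delta_m = - minpoly_seq n q m]. *)
Definition orbit (n : nat) (q : nat -> Z) (m : nat) : C :=
  gauss n (q (S m) + 2 * Z.of_nat n * q m) (q m).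

Lemma orbit_S (n : nat) (q : nat -> Z) (m : nat) :
  orbit n q (S m) = (base n * orbit n q m + RtoC (IZR (minpoly_seq n q m)))%C.
Proof.
  unfold orbit, minpoly_seq, minpoly_at, gauss, base.
  rewrite INR_IZR_INZ. generalize (Z.of_nat n) as N. intro N.
  repeat rewrite ?plus_IZR, ?mult_IZR.
  apply injective_projections; simpl; ring.
Qed.

Lemma sum_digit_term_orbit (n : nat) (q : nat -> Z) (m : nat) : q O = 0%Z ->
  sum_n (digit_term n (fun j => - minpoly_seq n q j)%Z) m
  = (RtoC (IZR (q 1%nat)) - orbit n q (S m) * binvpow n (S m))%C.
Proof.
  intro Hq0. pose proof (base_neq0 n) as Hb.
  assert (Horb0 : orbit n q O = RtoC (IZR (q 1%nat))).
  { unfold orbit, gauss. rewrite Hq0, Z.mul_0_r, Z.add_0_r.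
    apply injective_projections; simpl; ring. }
  induction m as [|m IH].
  - rewrite sum_O. unfold digit_term, binvpow. rewrite orbit_S, Horb0, opp_IZR, RtoC_opp.
    simpl. field. exact Hb.
  - rewrite sum_Sn, IH. unfold digit_term, binvpow, plus. simpl.
    rewrite (orbit_S n q (S m)), opp_IZR, RtoC_opp.
    field. split; [apply Cpow_nz |]; exact Hb.
Qed.

Lemma is_series_orbit_iff (n : nat) (q : nat -> Z) : q O = 0%Z ->
  is_series (digit_term n (fun j => - minpoly_seq n q j)%Z) (RtoC (IZR (q 1%nat)))
  <-> is_lim_seq (fun m => Cmod (orbit n q m) / Cmod (base n) ^ m) 0.
Proof.
  intro Hq0. rewrite is_series_Cmod_iff, (is_lim_seq_incr_1 (fun m => _ / _)).
  assert (Hrem : forall m,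
    Cmod (sum_n (digit_term n (fun j => - minpoly_seq n q j)%Z) m - RtoC (IZR (q 1%nat)))
    = Cmod (orbit n q (S m)) / Cmod (base n) ^ S m).
  { intro m. rewrite sum_digit_term_orbit by exact Hq0.
    replace (_ - _ - _)%C with (- (orbit n q (S m) * binvpow n (S m)))%C by ring.
    now rewrite Cmod_opp, Cmod_mult, Cmod_binvpow. }
  split; apply is_lim_seq_ext; intro m; rewrite Hrem; reflexivity.
Qed.

Lemma abs_le_Cmod_gauss (n : nat) (p q : Z) : Rabs (IZR q) <= Cmod (gauss n p q).
Proof.
  eapply Rle_trans; [|apply Rmax_Cmod]. unfold gauss, base. simpl.
  replace (0 + (IZR q * 1 + 0 * - INR n)) with (IZR q) by ring. apply Rmax_r.
Qed.

Lemma Cmod_gauss_le (n : nat) (p q : Z) :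
  Cmod (gauss n p q) <= Rabs (IZR p) + Rabs (IZR q) * Cmod (base n).
Proof.
  unfold gauss. eapply Rle_trans; [apply Cmod_triangle|].
  now rewrite Cmod_mult, !Cmod_R.
Qed.

Lemma Cmod_orbit_S (n : nat) (q : nat -> Z) (m : nat) :
  Cmod (base n) * Cmod (orbit n q m) - IZR (Z.abs (minpoly_seq n q m))
  <= Cmod (orbit n q (S m)).
Proof.
  rewrite orbit_S, abs_IZR, <- Cmod_R, <- Cmod_mult.
  pose proof (Cmod_triangle (base n * orbit n q m + RtoC (IZR (minpoly_seq n q m)))
                            (- RtoC (IZR (minpoly_seq n q m)))) as Htri.
  rewrite Cmod_opp in Htri.
  replace (_ + _ + _)%C with (base n * orbit n q m)%C in Htri by ring. lra.
Qed.

Lemma expansion_of_admissible (n : nat) (D k B : Z) (q : nat -> Z) :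
  (1 <= n)%nat -> admissible n D k q -> (forall m, Z.abs (q m) <= B)%Z -> expansion n D k.
Proof.
  intros Hn [Hq0 [Hq1 HD]] HB. exists (fun j => - minpoly_seq n q j)%Z. split.
  { intro j. rewrite Z.abs_opp. apply HD. }
  rewrite <- Hq1, is_series_orbit_iff by exact Hq0.
  apply (is_lim_seq_div_pow_bounded _ _
           (IZR ((1 + 2 * Z.of_nat n) * B) + IZR B * Cmod (base n))).
  { apply Cmod_base_gt1, Hn. }
  intro m. split; [apply Cmod_ge_0|].
  eapply Rle_trans; [apply Cmod_gauss_le|].
  apply Rplus_le_compat; [|apply Rmult_le_compat_r; [apply Cmod_ge_0|]];
    rewrite <- abs_IZR; apply IZR_le; [|apply HB].
  pose proof (HB m). pose proof (HB (S m)). nia.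
Qed.

Fixpoint orbit_coords (n : nat) (delta : nat -> Z) (k : Z) (m : nat) : Z * Z :=
  match m with
  | O => (0, k)%Z
  | S m => let (a, c) := orbit_coords n delta k m in
           (c, - delta m - 2 * Z.of_nat n * c - (Z.of_nat n * Z.of_nat n + 1) * a)%Z
  end.

Lemma minpoly_orbit_coords (n : nat) (delta : nat -> Z) (k : Z) (m : nat) :
  minpoly_seq n (fun m => fst (orbit_coords n delta k m)) m = (- delta m)%Z.
Proof.
  unfold minpoly_seq, minpoly_at. simpl.
  destruct (orbit_coords n delta k m) as [a c]. simpl. ring.
Qed.

Lemma admissible_of_expansion (n : nat) (D k : Z) : (1 <= n)%nat -> expansion n D k ->
  exists q, admissible n D k q /\
    forall m, IZR (Z.abs (q m)) * (Cmod (base n) - 1) <= IZR D.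
Proof.
  intros Hn [delta [Hdelta Hs]].
  set (q := fun m => fst (orbit_coords n delta k m)).
  assert (Hmp : forall m, minpoly_seq n q m = (- delta m)%Z) by apply minpoly_orbit_coords.
  exists q. split.
  { split; [reflexivity | split; [reflexivity|]].
    intro m. rewrite Hmp, Z.abs_opp. apply Hdelta. }
  assert (Hlim : is_lim_seq (fun m => Cmod (orbit n q m) / Cmod (base n) ^ m) 0).
  { apply is_series_orbit_iff; [reflexivity|].
    eapply is_series_ext; [|exact Hs]. intro j.
    unfold digit_term. now rewrite Hmp, Z.opp_involutive. }
  pose proof (Cmod_base_gt1 n Hn) as Hr.
  assert (Horbit : forall m, Cmod (orbit n q m) <= IZR D / (Cmod (base n) - 1)).
  { apply le_of_expanding; [exact Hr | | exact Hlim].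
    intro m. eapply Rle_trans; [|apply Cmod_orbit_S].
    rewrite Hmp, Z.abs_opp. apply Rplus_le_compat_l, Ropp_le_contravar, IZR_le, Hdelta. }
  intro m. specialize (Horbit m). rewrite abs_IZR.
  apply (Rmult_le_compat_r (Cmod (base n) - 1)) in Horbit; [|lra].
  unfold Rdiv in Horbit. rewrite Rmult_assoc, Rinv_l, Rmult_1_r in Horbit by lra.
  eapply Rle_trans; [|exact Horbit].
  apply Rmult_le_compat_r; [lra | apply abs_le_Cmod_gauss].
Qed.

Lemma admissible_le_of_expansion (n : nat) (D M k : Z) :
  (1 <= n)%nat -> IZR D < IZR (M + 1) * (Cmod (base n) - 1) -> expansion n D k ->
  exists q, admissible n D k q /\ forall m, (Z.abs (q m) <= M)%Z.
Proof.
  intros Hn HD Hexp. pose proof (Cmod_base_gt1 n Hn).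
  destruct (admissible_of_expansion n D k Hn Hexp) as [q [Hq Hqr]].
  exists q. split; [exact Hq|]. intro m.
  apply (abs_le_of_real_bound _ D _ (Cmod (base n) - 1)); [lra | apply Hqr | exact HD].
Qed.

Lemma minpoly_at_abs_le (n : nat) (a c e : Z) :
  ((Z.of_nat n * Z.of_nat n + 1) * Z.abs a
   <= Z.abs (minpoly_at n a c e) + Z.abs e + 2 * Z.of_nat n * Z.abs c)%Z.
Proof.
  unfold minpoly_at. set (N := Z.of_nat n).
  assert (HN : (0 <= N)%Z) by lia.
  rewrite <- (Z.abs_eq (N * N + 1)) by nia. rewrite <- (Z.abs_eq (2 * N)) at 2 by lia.
  rewrite <- !Z.abs_mul.
  replace ((N * N + 1) * a)%Z with ((e + 2 * N * c + (N * N + 1) * a) - e - 2 * N * c)%Z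
    at 1 by ring.
  pose proof (Z.abs_sub_triangle (e + 2 * N * c + (N * N + 1) * a - e) (2 * N * c)).
  pose proof (Z.abs_sub_triangle (e + 2 * N * c + (N * N + 1) * a) e). lia.
Qed.

(* Comparing [(n^2 + 1) q_m] with the other terms of the recurrence improves any bound [B]
   on [|q|] with [(n^2 - 2n) B > D] to [B - 1]. *)
Lemma minpoly_descent (n : nat) (D B : Z) (q : nat -> Z) :
  (forall m, Z.abs (minpoly_seq n q m) <= D)%Z -> (forall m, Z.abs (q m) <= B)%Z ->
  forall m, ((Z.of_nat n * Z.of_nat n - 2 * Z.of_nat n) * Z.abs (q m) <= D)%Z.
Proof.
  intros HD HB. set (N := Z.of_nat n).
  assert (HN : (0 <= N)%Z) by lia.
  assert (Hb : forall b : nat, (forall m, Z.abs (q m) <= Z.of_nat b)%Z ->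
                 forall m, ((N * N - 2 * N) * Z.abs (q m) <= D)%Z).
  { induction b as [|b IH]; intros Hb m.
    - pose proof (HB m). pose proof (HD m). pose proof (Z.abs_nonneg (minpoly_seq n q m)).
      specialize (Hb m). nia.
    - destruct (Z.le_gt_cases ((N * N - 2 * N) * Z.of_nat (S b)) D) as [Hsmall|Hbig].
      + specialize (Hb m). pose proof (HD m). pose proof (Z.abs_nonneg (minpoly_seq n q m)).
        nia.
      + apply IH. intro m'.
        pose proof (minpoly_at_abs_le n (q m') (q (S m')) (q (S (S m')))) as Htri.
        pose proof (HD m'). pose proof (Hb (S m')). pose proof (Hb (S (S m'))).
        unfold minpoly_seq in *. fold N in Htri. nia. }
  apply (Hb (Z.to_nat B)). intro m. specialize (HB m). lia.
Qed.

Lemma admissible_descent_of_expansion (n : nat) (D k : Z) :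
  (2 <= n)%nat -> (0 <= D)%Z -> expansion n D k ->
  exists q, admissible n D k q /\
    forall m, ((Z.of_nat n * Z.of_nat n - 2 * Z.of_nat n) * Z.abs (q m) <= D)%Z.
Proof.
  intros Hn HD Hexp.
  assert (Hr : 2 <= Cmod (base n))
    by (apply le_Cmod_base; [lra | apply le_INR in Hn; simpl in *; nra]).
  destruct (admissible_le_of_expansion n D D k) as [q [Hq HqD]]; [lia | | exact Hexp |].
  { apply IZR_le in HD. rewrite plus_IZR. nra. }
  exists q. split; [exact Hq|].
  apply (minpoly_descent n D D q); [apply Hq | exact HqD].
Qed.

(** * Finite search for starting values *)

Definition zrange (M : Z) : list Z :=
  map (fun i => Z.of_nat i - M)%Z (seq 0 (Z.to_nat (2 * M + 1))).

Lemma in_zrange (M x : Z) : (- M <= x <= M)%Z -> In x (zrange M).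
Proof.
  intro Hx. apply in_map_iff. exists (Z.to_nat (x + M)). split; [lia|].
  apply in_seq. lia.
Qed.

Definition mem_pair (p : Z * Z) (S : list (Z * Z)) : bool :=
  existsb (fun p' => (Z.eqb (fst p) (fst p') && Z.eqb (snd p) (snd p'))%bool) S.

Lemma mem_pair_In (p : Z * Z) (S : list (Z * Z)) : In p S -> mem_pair p S = true.
Proof.
  intro H. apply existsb_exists. exists p. split; [exact H|].
  now rewrite !Z.eqb_refl.
Qed.

Definition prune (n : nat) (D M : Z) (S : list (Z * Z)) : list (Z * Z) :=
  filter (fun p => existsb (fun e =>
    (Z.abs (minpoly_at n (fst p) (snd p) e) <=? D)%Z && mem_pair (snd p, e) S)%bool (zrange M)) S.

Definition pruned (n : nat) (D M : Z) (fuel : nat) : list (Z * Z) :=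
  Nat.iter fuel (prune n D M) (list_prod (zrange M) (zrange M)).

Definition start_bound_check (n : nat) (D M K : Z) (fuel : nat) : bool :=
  forallb (fun c => negb (mem_pair (0%Z, c) (pruned n D M fuel)) || (Z.abs c <=? K)%Z)%bool
    (zrange M).

Lemma In_pruned (n : nat) (D M : Z) (q : nat -> Z) :
  (forall m, Z.abs (q m) <= M)%Z -> (forall m, Z.abs (minpoly_seq n q m) <= D)%Z ->
  forall fuel m, In (q m, q (S m)) (pruned n D M fuel).
Proof.
  intros HM HD fuel. induction fuel as [|fuel IH]; intro m; simpl.
  - apply in_prod; apply in_zrange; [pose proof (HM m) | pose proof (HM (S m))]; lia.
  - apply filter_In. split; [apply IH|].
    apply existsb_exists. exists (q (S (S m))). split.
    + apply in_zrange. pose proof (HM (S (S m))). lia.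
    + rewrite mem_pair_In by apply IH. rewrite andb_true_r.
      apply Z.leb_le, HD.
Qed.

Lemma start_bound_check_sound (n : nat) (D M K : Z) (fuel : nat) (k : Z) :
  start_bound_check n D M K fuel = true ->
  (exists q, admissible n D k q /\ forall m, (Z.abs (q m) <= M)%Z) -> (Z.abs k <= K)%Z.
Proof.
  intros Hc [q [[Hq0 [Hq1 HD]] HM]].
  pose proof (In_pruned n D M q HM HD fuel O) as Hin. rewrite Hq0, Hq1 in Hin.
  unfold start_bound_check in Hc. rewrite forallb_forall in Hc.
  specialize (Hc k (in_zrange M k ltac:(pose proof (HM 1%nat); lia))).
  rewrite mem_pair_In in Hc by exact Hin. apply Z.leb_le, Hc.
Qed.

Lemma start_bound_checks :
  start_bound_check 1 2 5 2 6 = true /\ start_bound_check 1 1 2 1 6 = true /\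
  start_bound_check 2 8 6 3 6 = true /\ start_bound_check 2 4 3 1 6 = true /\
  start_bound_check 3 18 6 3 6 = true /\ start_bound_check 3 9 3 1 6 = true /\
  start_bound_check 4 32 4 3 6 = true /\ start_bound_check 4 16 2 1 6 = true /\
  start_bound_check 5 50 3 2 6 = true /\ start_bound_check 6 72 3 2 6 = true.
Proof. vm_compute. repeat split. Qed.

(** * Eventually periodic solutions *)

Definition cycle (cyc : list Z) (m : nat) : Z := nth (m mod length cyc) cyc 0%Z.

(* [pre] followed by [cyc] repeated forever: past the end of [pre], [nth] returns its default. *)
Definition lasso (pre cyc : list Z) (m : nat) : Z := nth m pre (cycle cyc (m - length pre)).

Lemma lasso_periodic (pre cyc : list Z) (m : nat) : cyc <> [] -> (length pre <= m)%nat ->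
  lasso pre cyc (m + length cyc) = lasso pre cyc m.
Proof.
  intros Hcyc Hm. unfold lasso, cycle.
  rewrite (nth_overflow pre (n := m)), (nth_overflow pre (n := m + length cyc)) by lia.
  replace (m + length cyc - length pre)%nat with (m - length pre + 1 * length cyc)%nat by lia.
  now rewrite Nat.Div0.mod_add.
Qed.

Lemma minpoly_lasso_bound (n : nat) (D : Z) (pre cyc : list Z) : cyc <> [] ->
  (forall m, (m < length pre + length cyc)%nat ->
     (Z.abs (minpoly_seq n (lasso pre cyc) m) <= D)%Z) ->
  forall m, (Z.abs (minpoly_seq n (lasso pre cyc) m) <= D)%Z.
Proof.
  intros Hcyc Hfirst m.
  induction m as [m IH] using lt_wf_ind.
  destruct (Nat.lt_ge_cases m (length pre + length cyc)) as [Hm|Hm]; [auto|].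
  assert (Hlen : length cyc <> 0%nat) by (destruct cyc; simpl; [congruence | lia]).
  replace m with (m - length cyc + length cyc)%nat by lia.
  unfold minpoly_seq.
  rewrite <- !plus_Sn_m, !lasso_periodic by (auto; lia).
  apply IH. lia.
Qed.

Lemma lasso_bounded (pre cyc : list Z) :
  exists B, forall m, (Z.abs (lasso pre cyc m) <= B)%Z.
Proof.
  set (sum_abs := fold_right (fun x s => Z.abs x + s)%Z 0%Z).
  assert (Hpos : forall l, (0 <= sum_abs l)%Z).
  { induction l as [|y l IH]; simpl; [lia | pose proof (Z.abs_nonneg y); lia]. }
  assert (Hsum : forall l x, In x l -> (Z.abs x <= sum_abs l)%Z).
  { induction l as [|y l IH]; intros x Hx; [destruct Hx|].
    destruct Hx as [<- | Hx]; simpl;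
      [pose proof (Hpos l) | specialize (IH x Hx); pose proof (Z.abs_nonneg y)]; lia. }
  exists (sum_abs pre + sum_abs cyc)%Z. intro m. unfold lasso, cycle.
  pose proof (Hpos pre). pose proof (Hpos cyc).
  destruct (nth_in_or_default m pre (nth ((m - length pre) mod length cyc) cyc 0%Z))
    as [Hin | ->]; [specialize (Hsum _ _ Hin); lia|].
  destruct (nth_in_or_default ((m - length pre) mod length cyc) cyc 0%Z)
    as [Hin | ->]; [specialize (Hsum _ _ Hin); lia | simpl; lia].
Qed.

Lemma expansion_of_lasso (n : nat) (D k : Z) (pre cyc : list Z) :
  (1 <= n)%nat -> admissible n D k (lasso pre cyc) -> expansion n D k.
Proof.
  intros Hn Hq. destruct (lasso_bounded pre cyc) as [B HB].
  exact (expansion_of_admissible n D k B _ Hn Hq HB).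
Qed.

Lemma unit_lasso_admissible (n : nat) : (1 <= n)%nat ->
  admissible n (Z.of_nat n * Z.of_nat n) 1 (lasso [] [0; 1; -1]%Z).
Proof.
  intro Hn. split; [reflexivity | split; [reflexivity|]].
  apply minpoly_lasso_bound; [discriminate|]. intros m Hm.
  unfold minpoly_seq, lasso, cycle. simpl length. simpl Nat.sub.
  destruct m as [|[|[|m]]]; [| | | simpl in Hm; lia];
    simpl Nat.modulo; simpl nth; unfold minpoly_at; apply Z.abs_le; split; nia.
Qed.

Lemma three_lasso_admissible :
  admissible 2 8 3 (lasso [0; 3]%Z [-4; 4]%Z) /\ admissible 3 18 3 (lasso [] [0; 3; -2]%Z) /\
  admissible 4 32 3 (lasso [0]%Z [3; -3]%Z).
Proof.
  repeat split; apply minpoly_lasso_bound; try discriminate; intros m Hm; simpl in Hm;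
    do 4 (destruct m as [|m]; [apply Z.leb_le; vm_compute; reflexivity|]); lia.
Qed.

Lemma expansion_of_small (n : nat) (D k : Z) : (1 <= n)%nat ->
  (Z.abs k * (Z.of_nat n * Z.of_nat n) <= D)%Z -> expansion n D k.
Proof.
  intros Hn Hk. replace k with (k * 1)%Z by ring.
  apply (expansion_scale n (Z.of_nat n * Z.of_nat n)); [exact Hk|].
  exact (expansion_of_lasso n _ 1 _ _ Hn (unit_lasso_admissible n Hn)).
Qed.

Lemma T_expansion_abs_le (n : nat) (k : Z) : (1 <= n)%nat ->
  expansion n (Z.of_nat n * Z.of_nat n) k -> (Z.abs k <= 1)%Z.
Proof.
  intros Hn Hexp.
  destruct start_bound_checks as (_ & c1 & _ & c2 & _ & c3 & _ & c4 & _).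
  destruct (Nat.le_gt_cases n 2) as [Hle2|Hgt2].
  - assert (Hr1 : 1.4 <= Cmod (base 1)) by (apply le_Cmod_base; simpl; lra).
    assert (Hr2 : 2.2 <= Cmod (base 2)) by (apply le_Cmod_base; simpl; lra).
    assert (n = 1 \/ n = 2)%nat as [-> | ->] by lia;
      [apply (start_bound_check_sound _ _ _ _ _ _ c1) |
       apply (start_bound_check_sound _ _ _ _ _ _ c2)];
      apply admissible_le_of_expansion; auto; simpl; lra.
  - destruct (admissible_descent_of_expansion n (Z.of_nat n * Z.of_nat n) k)
      as [q [Hq Hqd]]; [lia | nia | exact Hexp |].
    destruct (Nat.lt_ge_cases n 5) as [Hlt5|Hge5].
    + assert (n = 3 \/ n = 4)%nat as [-> | ->] by lia;
        [apply (start_bound_check_sound _ _ _ _ _ _ c3) |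
         apply (start_bound_check_sound _ _ _ _ _ _ c4)];
        exists q; split; try exact Hq; intro m; specialize (Hqd m); simpl Z.of_nat in Hqd; lia.
    + destruct Hq as [_ [Hq1 _]]. specialize (Hqd 1%nat). rewrite Hq1 in Hqd.
      assert (HN : (5 <= Z.of_nat n)%Z) by lia. nia.
Qed.

Lemma E_expansion_abs_le (n : nat) (k : Z) : (1 <= n)%nat ->
  expansion n (2 * (Z.of_nat n * Z.of_nat n)) k ->
  if (orb (Nat.eqb n 1) (Nat.leb 5 n)) then (Z.abs k <= 2)%Z else (Z.abs k <= 3)%Z.
Proof.
  intros Hn Hexp.
  destruct start_bound_checks as (c1 & _ & c2 & _ & c3 & _ & c4 & _ & c5 & c6).
  destruct (Nat.le_gt_cases n 2) as [Hle2|Hgt2].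
  - assert (Hr1 : 1.4 <= Cmod (base 1)) by (apply le_Cmod_base; simpl; lra).
    assert (Hr2 : 2.2 <= Cmod (base 2)) by (apply le_Cmod_base; simpl; lra).
    assert (n = 1 \/ n = 2)%nat as [-> | ->] by lia; simpl;
      [apply (start_bound_check_sound _ _ _ _ _ _ c1) |
       apply (start_bound_check_sound _ _ _ _ _ _ c2)];
      apply admissible_le_of_expansion; auto; simpl; lra.
  - destruct (admissible_descent_of_expansion n (2 * (Z.of_nat n * Z.of_nat n)) k)
      as [q [Hq Hqd]]; [lia | nia | exact Hexp |].
    destruct (Nat.lt_ge_cases n 7) as [Hlt7|Hge7].
    + assert (n = 3 \/ n = 4 \/ n = 5 \/ n = 6)%nat as [-> | [-> | [-> | ->]]] by lia; simpl;
        [apply (start_bound_check_sound _ _ _ _ _ _ c3) |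
         apply (start_bound_check_sound _ _ _ _ _ _ c4) |
         apply (start_bound_check_sound _ _ _ _ _ _ c5) |
         apply (start_bound_check_sound _ _ _ _ _ _ c6)];
        exists q; split; try exact Hq; intro m; specialize (Hqd m); simpl Z.of_nat in Hqd; lia.
    + replace (orb (Nat.eqb n 1) (Nat.leb 5 n)) with true
        by (symmetry; apply orb_true_iff; right; apply Nat.leb_le; lia).
      destruct Hq as [_ [Hq1 _]]. specialize (Hqd 1%nat). rewrite Hq1 in Hqd.
      assert (HN : (7 <= Z.of_nat n)%Z) by lia. nia.
Qed.

Lemma E_expansion_of_abs_le (n : nat) (k : Z) : (1 <= n)%nat ->
  (if (orb (Nat.eqb n 1) (Nat.leb 5 n)) then (Z.abs k <= 2)%Z else (Z.abs k <= 3)%Z) ->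
  expansion n (2 * (Z.of_nat n * Z.of_nat n)) k.
Proof.
  intros Hn Hk.
  destruct (Z.le_gt_cases (Z.abs k) 2) as [Hk2|Hk2]; [apply expansion_of_small; nia|].
  destruct (orb (Nat.eqb n 1) (Nat.leb 5 n)) eqn:Hcase; [lia|].
  apply orb_false_iff in Hcase as [Hne1 Hlt5].
  apply Nat.eqb_neq in Hne1. apply Nat.leb_gt in Hlt5.
  replace k with (Z.sgn k * 3)%Z by lia.
  apply (expansion_scale n (2 * (Z.of_nat n * Z.of_nat n))); [lia|].
  destruct three_lasso_admissible as (H2 & H3 & H4).
  assert (n = 2 \/ n = 3 \/ n = 4)%nat as [-> | [-> | ->]] by lia;
    [exact (expansion_of_lasso 2 _ _ _ _ ltac:(lia) H2) |
     exact (expansion_of_lasso 3 _ _ _ _ ltac:(lia) H3) |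
     exact (expansion_of_lasso 4 _ _ _ _ ltac:(lia) H4)].
Qed.

Theorem corollary3p4 (n : nat) (hn : (1 <= n)%nat) :
  (forall k : Z, real_neighbour (E_set n) k <->
     (if (orb (Nat.eqb n 1) (Nat.leb 5 n)) then (Z.abs k <= 2)%Z else (Z.abs k <= 3)%Z))
  /\ (forall k : Z, real_neighbour (T_set n) k <-> (Z.abs k <= 1)%Z).
Proof.
  split; intro k.
  - rewrite real_neighbour_E_iff by exact hn.
    split; [apply E_expansion_abs_le | apply E_expansion_of_abs_le]; exact hn.
  - rewrite real_neighbour_T_iff by exact hn.
    split; [apply T_expansion_abs_le, hn | intro Hk; apply expansion_of_small; nia].
Qed.
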